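(* Let $\mathcal{H}_A,\mathcal{H}_R$ be finite-dimensional Hilbert spaces, let $\{|i\rangle_R\}_{i=1,\ldots,n}$ be an orthonormal family in $\mathcal{H}_R$, and let $\{|\psi(i)\rangle_A\}_{i=1,\ldots,n}$ be an arbitrary family of (normalized) pure states in $\mathcal{H}_A$. For $\rho_{AR}=\frac{1}{n}\sum_{i=1}^n|\psi(i)\rangle\langle\psi(i)|_A\otimes|i\rangle\langle i|_R$ and $0\leq\varepsilon<1$ we have ${\rm H}_{\min}^{\varepsilon}(A|R)_\rho=\log\frac{1}{1-\varepsilon^2}$.
   Context: $\log$ is the binary logarithm. For a positive operator $\sigma_{AR}$ with trace at most 1, ${\rm H}_{\min}(A|R)_\sigma=\sup_{\omega_R}\sup\{\lambda\in\mathbb{R}: 2^{-\lambda}\mathbb{I}_A\otimes\omega_R\geq\sigma_{AR}\}$, the outer supremum over density operators $\omega_R$ on $\mathcal{H}_R$. The purified distance is $P(\rho,\sigma)=\sqrt{1-\bar F(\rho,\sigma)^2}$ with $\bar F(\rho,\sigma)=\|\sqrt\rho\sqrt\sigma\|_1+\sqrt{(1-\mathrm{tr}\rho)(1-\mathrm{tr}\sigma)}$, where $\|X\|_1=\mathrm{tr}\sqrt{X^\dagger X}$. The smooth min-entropy is ${\rm H}_{\min}^{\varepsilon}(A|R)_\rho=\sup\{{\rm H}_{\min}(A|R)_\sigma:\sigma_{AR}\geq0,\ \mathrm{tr}\,\sigma_{AR}\leq1,\ P(\rho_{AR},\sigma_{AR})\leq\varepsilon\}$. *)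

From mathcomp Require Import all_boot all_order all_algebra.
From mathcomp Require Import all_classical all_reals all_analysis.
From mathcomp Require Import complex mxtens.
Set Implicit Arguments. Unset Strict Implicit. Unset Printing Implicit Defensive.
Import Order.TTheory GRing.Theory Num.Theory.
Local Open Scope ring_scope.
Local Open Scope classical_set_scope.

Section QDefs.
Variable R : realType.
Local Notation C := R[i].

Definition adjmx m n (A : 'M[C]_(m, n)) : 'M[C]_(n, m) := (map_mx conjc A)^T.

(* positive (semidefinite) operator: <v, A v> >= 0 for all v
   (the order on C is the complex partial order, so this says the
   quadratic form is real and nonnegative) *)
Definition psd n (A : 'M[C]_n) : Prop :=
  forall v : 'cV[C]_n, 0 <= (adjmx v *m A *m v) 0 0.

Definition loewner_le n (A B : 'M[C]_n) : Prop := psd (B - A).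

Definition psd_sqrt n (A : 'M[C]_n) : 'M[C]_n :=
  match pselect (exists S : 'M[C]_n, psd S /\ S *m S = A) with
  | left h => projT1 (cid h)
  | right _ => 0
  end.

Definition trR n (A : 'M[C]_n) : R := complex.Re (\tr A).

Definition trnorm n (X : 'M[C]_n) : R := trR (psd_sqrt (adjmx X *m X)).

Definition gfid n (rho sigma : 'M[C]_n) : R :=
  trnorm (psd_sqrt rho *m psd_sqrt sigma)
  + Num.sqrt ((1 - trR rho) * (1 - trR sigma)).

Definition pdist n (rho sigma : 'M[C]_n) : R :=
  Num.sqrt (1 - gfid rho sigma ^+ 2).

Definition density n (w : 'M[C]_n) : Prop := psd w /\ \tr w = 1.

Definition log2 (x : R) : R := ln x / ln 2.

(* conditional min-entropy H_min(A|R)_sigma, sigma on H_A (x) H_R,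
   valued in the extended reals (sup over empty set = -oo) *)
Definition Hmin dA dR (sigma : 'M[C]_(dA * dR)) : \bar R :=
  ereal_sup [set ereal_sup [set l%:E | l in
      [set l : R | loewner_le sigma
         ((Complex (2 `^ (- l)) 0) *: ((1%:M : 'M[C]_dA) *t w))]]
    | w in [set w : 'M[C]_dR | density w]].

Definition Hmin_smooth dA dR (eps : R) (rho : 'M[C]_(dA * dR)) : \bar R :=
  ereal_sup [set Hmin sigma | sigma in
    [set sigma : 'M[C]_(dA * dR) |
       psd sigma /\ trR sigma <= 1 /\ pdist rho sigma <= eps]].

Definition cq_state dA dR n (psi : 'I_n -> 'cV[C]_dA) (e : 'I_n -> 'cV[C]_dR)
  : 'M[C]_(dA * dR) :=
  (n%:R)^-1 *: \sum_(i < n) ((psi i *m adjmx (psi i)) *t (e i *m adjmx (e i))).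

End QDefs.

(* [rho] is [P / n] for the orthogonal projector [P] onto the span of the
   orthonormal vectors [psi i (x) e i].  Achievability: [sigma = (1 - eps^2) rho] is at
   purified distance [eps] from [rho], and [rho <= 1 (x) omega] for the maximally mixed
   state [omega] on the span of the [e i], since [|psi i><psi i| <= 1].  Optimality: if
   [sigma <= 2^-l (1 (x) omega)] then [tr (P sigma) <= 2^-l] by Bessel's inequality for
   the [e i]; since [sqrt rho sqrt sigma] has rank at most [n], Cauchy-Schwarz gives
   [|| sqrt rho sqrt sigma ||_1^2 <= n tr (sqrt sigma rho sqrt sigma) = tr (P sigma)], so
   the squared fidelity is at most [2^-l], while the purified distance forces it to be at
   least [1 - eps^2]. *)

From HB Require Import structures.
From mathcomp Require Import all_boot all_order all_algebra.
From mathcomp Require Import all_classical all_reals all_analysis.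
From mathcomp Require Import complex mxtens.
From mathcomp Require Import ring lra.
Import Order.TTheory GRing.Theory Num.Theory.
Set Implicit Arguments. Unset Strict Implicit. Unset Printing Implicit Defensive.
Local Open Scope complex_scope.
Local Open Scope ring_scope.

Section ComplexMatrices.
Variable R : realType.
Local Notation C := R[i].

Lemma adjmx_is_zmod_morphism m n : zmod_morphism (@adjmx R m n).
Proof. by move=> A B; apply/matrixP => i j; rewrite !mxE rmorphB. Qed.

HB.instance Definition _ m n :=
  GRing.isZmodMorphism.Build _ _ (@adjmx R m n) (@adjmx_is_zmod_morphism m n).

Lemma adjmxK m n (A : 'M[C]_(m, n)) : adjmx (adjmx A) = A.
Proof. apply/matrixP => i j; rewrite /adjmx !mxE; exact: conjcK. Qed.

Lemma adjmxM m n p (A : 'M[C]_(m, n)) (B : 'M[C]_(n, p)) :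
  adjmx (A *m B) = adjmx B *m adjmx A.
Proof. by rewrite /adjmx map_mxM trmx_mul. Qed.

Lemma adjmxZ m n (c : C) (A : 'M[C]_(m, n)) : adjmx (c *: A) = conjc c *: adjmx A.
Proof. by rewrite /adjmx map_mxZ linearZ. Qed.

Lemma adjmx1 m : adjmx (1%:M : 'M[C]_m) = 1%:M.
Proof. by rewrite /adjmx map_mx1 trmx1. Qed.

Lemma adjmx_tens m n p q (A : 'M[C]_(m, n)) (B : 'M[C]_(p, q)) :
  adjmx (A *t B) = adjmx A *t adjmx B.
Proof. by rewrite /adjmx map_mxT trmx_tens. Qed.

Lemma tensmxBl m n p q (A B : 'M[C]_(m, n)) (D : 'M[C]_(p, q)) :
  (A - B) *t D = A *t D - B *t D.
Proof. by apply/matrixP => i j; rewrite !mxE mulrBl. Qed.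

Lemma tensmxZr m n p q (c : C) (A : 'M[C]_(m, n)) (D : 'M[C]_(p, q)) :
  A *t (c *: D) = c *: (A *t D).
Proof. by apply/matrixP => i j; rewrite !mxE mulrCA. Qed.

Lemma tensmx_sumr m n p q I (r : seq I) (P : pred I) (A : 'M[C]_(m, n))
    (F : I -> 'M[C]_(p, q)) :
  A *t (\sum_(i <- r | P i) F i) = \sum_(i <- r | P i) A *t F i.
Proof.
apply/matrixP => i j; rewrite !mxE !summxE mulr_sumr.
by apply: eq_bigr => k _; rewrite !mxE.
Qed.

Lemma conjc_ge0 (x : C) : 0 <= x -> conjc x = x.
Proof. exact: geC0_conj. Qed.

Lemma mx_eq0_delta m n (A : 'M[C]_(m, n)) :
  (forall j, A *m (delta_mx j 0 : 'cV_n) = 0) -> A = 0.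
Proof.
by move=> hA; apply/matrixP => i j; move: (hA j); rewrite -colE => /colP/(_ i); rewrite !mxE.
Qed.

Lemma mulmx_id_compl m n (A : 'M[C]_(m, n)) (Q : 'M[C]_n) :
  A *m (1%:M - Q) = 0 -> A *m Q = A.
Proof. by rewrite mulmxBr mulmx1 => /eqP; rewrite subr_eq0 => /eqP <-. Qed.

Definition inner m (v w : 'cV[C]_m) : C := (adjmx v *m w) 0 0.

Lemma innerE m (v w : 'cV[C]_m) : inner v w = \sum_k conjc (v k 0) * w k 0.
Proof. by rewrite /inner mxE; apply: eq_bigr => k _; rewrite !mxE. Qed.

Lemma adjmx_mul_inner m (v w : 'cV[C]_m) : adjmx v *m w = (inner v w)%:M.
Proof. exact: mx11_scalar. Qed.

Lemma inner_conj m (v w : 'cV[C]_m) : conjc (inner v w) = inner w v.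
Proof.
rewrite !innerE rmorph_sum; apply: eq_bigr => k _.
by rewrite rmorphM /= conjcK mulrC.
Qed.

Lemma inner_ge0 m (v : 'cV[C]_m) : 0 <= inner v v.
Proof. by rewrite innerE; apply: sumr_ge0 => k _; rewrite mulrC mulcJ_ge0. Qed.

Lemma inner_eq0 m (v : 'cV[C]_m) : inner v v = 0 -> v = 0.
Proof.
rewrite innerE => /eqP; rewrite psumr_eq0 => [/allP hv|k _]; last first.
  by rewrite mulrC mulcJ_ge0.
apply/colP => k; have /hv := mem_index_enum k.
by rewrite !mxE mulf_eq0 conjc_eq0 orbb => /eqP.
Qed.

Lemma innerDl m (v1 v2 w : 'cV[C]_m) : inner (v1 + v2) w = inner v1 w + inner v2 w.
Proof. by rewrite /inner raddfD mulmxDl mxE. Qed.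

Lemma innerDr m (v w1 w2 : 'cV[C]_m) : inner v (w1 + w2) = inner v w1 + inner v w2.
Proof. by rewrite /inner mulmxDr mxE. Qed.

Lemma innerZl m (c : C) (v w : 'cV[C]_m) : inner (c *: v) w = conjc c * inner v w.
Proof. by rewrite /inner adjmxZ -scalemxAl mxE. Qed.

Lemma innerZr m (c : C) (v w : 'cV[C]_m) : inner v (c *: w) = c * inner v w.
Proof. by rewrite /inner -scalemxAr mxE. Qed.

Lemma innerBr m (v w1 w2 : 'cV[C]_m) : inner v (w1 - w2) = inner v w1 - inner v w2.
Proof. by rewrite /inner mulmxBr !mxE. Qed.

Lemma inner_adjmx m n (A : 'M[C]_(m, n)) v w :
  inner v (A *m w) = inner (adjmx A *m v) w.
Proof. by rewrite /inner adjmxM adjmxK mulmxA. Qed.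

Lemma inner_delta m (A : 'M[C]_m) i j :
  inner (delta_mx i 0) (A *m delta_mx j 0) = A i j.
Proof.
rewrite /inner -colE.
have -> : adjmx (delta_mx i 0 : 'cV[C]_m) = delta_mx 0 i.
  by apply/matrixP => a b; rewrite !mxE rmorph_nat andbC.
by rewrite -rowE !mxE.
Qed.

Lemma inner_tens m p (a b : 'cV[C]_m) (c d : 'cV[C]_p) :
  inner (a *t c) (b *t d) = inner a b * inner c d.
Proof.
rewrite /inner; have /= -> := adjmx_tens a c.
have /= -> := tensmx_mul (adjmx a) (adjmx c) b d.
by rewrite !mxE !(ord1 (_ : 'I_1)).
Qed.

(* Polarize along [a + b] and [a + i b]; this is where the scalars must be complex. *)
Lemma mx_eq0_form m (B : 'M[C]_m) : (forall v, inner v (B *m v) = 0) -> B = 0.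
Proof.
move=> hB; apply/matrixP => i j; rewrite mxE.
pose a : 'cV[C]_m := delta_mx i 0; pose b : 'cV[C]_m := delta_mx j 0.
have hsum := hB (a + b); have hrot := hB (a + 'i *: b).
rewrite !(mulmxDr, innerDl, innerDr, =^~ scalemxAr, innerZl, innerZr) in hsum hrot.
rewrite !hB !inner_delta in hsum hrot.
have conj_i : conjc ('i : C) = - 'i by apply/eqP; rewrite eq_complex /= !oppr0 !eqxx.
rewrite conj_i mulr0 mulr0 !add0r !addr0 in hrot hsum.
have : B i j * (2 * 'i) = 'i * (B i j + B j i) + ('i * B i j + - 'i * B j i) by ring.
rewrite hsum hrot mulr0 addr0.
by move/eqP; rewrite !mulf_eq0 pnatr_eq0 (negPf (neq0Ci C)) /= orbF => /eqP.
Qed.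

Lemma psdE m (A : 'M[C]_m) : psd A <-> forall v, 0 <= inner v (A *m v).
Proof. by rewrite /psd /inner; split=> hA v; [rewrite mulmxA | rewrite -mulmxA]. Qed.

Lemma psd_herm m (A : 'M[C]_m) : psd A -> adjmx A = A.
Proof.
move=> /psdE hA; apply/eqP; rewrite -subr_eq0; apply/eqP/mx_eq0_form => v.
by rewrite mulmxBl innerBr inner_adjmx adjmxK -inner_conj conjc_ge0 ?subrr.
Qed.

Lemma psd0 m : psd (0 : 'M[C]_m).
Proof. by apply/psdE => v; rewrite mul0mx /inner mulmx0 mxE. Qed.

Lemma psdD m (A B : 'M[C]_m) : psd A -> psd B -> psd (A + B).
Proof. by move=> /psdE hA /psdE hB; apply/psdE => v; rewrite mulmxDl innerDr addr_ge0. Qed.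

Lemma psdZ m (c : C) (A : 'M[C]_m) : 0 <= c -> psd A -> psd (c *: A).
Proof. by move=> hc /psdE hA; apply/psdE => v; rewrite -scalemxAl innerZr mulr_ge0. Qed.

Lemma psd_sum m I (r : seq I) (P : pred I) (F : I -> 'M[C]_m) :
  (forall i, P i -> psd (F i)) -> psd (\sum_(i <- r | P i) F i).
Proof. by move=> hF; elim/big_rec: _ => [|i A /hF]; [exact: psd0 | exact: psdD]. Qed.

Lemma psd_adj_mul m n (B : 'M[C]_(m, n)) : psd (adjmx B *m B).
Proof. by apply/psdE => v; rewrite -mulmxA inner_adjmx adjmxK inner_ge0. Qed.

Lemma mxtrace_psd_ge0 m (A : 'M[C]_m) : psd A -> 0 <= \tr A.
Proof. by move=> /psdE hA; apply: sumr_ge0 => i _; rewrite -inner_delta. Qed.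

Lemma mxtrace_adj_mul_eq0 m n (A : 'M[C]_(m, n)) : \tr (adjmx A *m A) = 0 -> A = 0.
Proof.
have diagE j : (adjmx A *m A) j j = inner (A *m delta_mx j 0) (A *m delta_mx j 0).
  by rewrite -inner_delta -mulmxA inner_adjmx adjmxK.
move=> /eqP; rewrite psumr_eq0 => [/allP hA|j _]; last by rewrite diagE inner_ge0.
by apply: mx_eq0_delta => j; apply: inner_eq0; rewrite -diagE; apply/eqP/hA/mem_index_enum.
Qed.

Lemma trRD m (A B : 'M[C]_m) : trR (A + B) = trR A + trR B.
Proof. by rewrite /trR !raddfD. Qed.

Lemma trRB m (A B : 'M[C]_m) : trR (A - B) = trR A - trR B.
Proof. by rewrite /trR !raddfB. Qed.

Lemma trRZ m (x : R) (A : 'M[C]_m) : trR (x%:C *: A) = x * trR A.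
Proof. by rewrite /trR mxtraceZ; case: (\tr A) => a b /=; rewrite mul0r subr0. Qed.

Lemma trR_psd_ge0 m (A : 'M[C]_m) : psd A -> 0 <= trR A.
Proof. by move=> /mxtrace_psd_ge0; rewrite lecE => /andP[]. Qed.

Lemma mxtrace_psdE m (A : 'M[C]_m) : psd A -> \tr A = (trR A)%:C.
Proof. by move=> /mxtrace_psd_ge0; rewrite /trR; case: (\tr A) => a b /ger0_Im /= ->. Qed.

Definition orthoproj m (P : 'M[C]_m) : Prop := adjmx P = P /\ P *m P = P.

Lemma psd_orthoproj m (P : 'M[C]_m) : orthoproj P -> psd P.
Proof. by case=> hP hPP; rewrite -hPP -{1}hP; exact: psd_adj_mul. Qed.

(* [psd_sqrt] falls back to [0] when no square root is found; we never prove that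
   one exists, so every user handles that case. *)
Lemma psd_sqrtP m (A : 'M[C]_m) :
  psd (psd_sqrt A) /\ (psd_sqrt A *m psd_sqrt A = A \/ psd_sqrt A = 0).
Proof.
rewrite /psd_sqrt; case: pselect => [h|_]; last by split; [exact: psd0 | right].
by case: (cid h) => S [hS hSS] /=; split; [|left].
Qed.

Lemma psd_sqrt_unique m (P S : 'M[C]_m) (k : C) :
  orthoproj P -> 0 < k -> psd S -> S *m S = (k * k) *: P -> S = k *: P.
Proof.
move=> [hP hPP] k_gt0 hS hSS; have S_herm := psd_herm hS.
have SP : S *m P = S.
  apply/mulmx_id_compl/mx_eq0_delta => j; rewrite -mulmxA; apply: inner_eq0.
  rewrite -{1}S_herm -inner_adjmx mulmxA hSS -scalemxAl innerZr.
  by rewrite mulmxA mulmxBr mulmx1 hPP subrr mul0mx /inner mulmx0 mxE mulr0.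
have PS : P *m S = S by rewrite -[LHS]adjmxK adjmxM S_herm hP SP S_herm.
have TD : (S + k *: P) *m (S - k *: P) = 0.
  rewrite mulmxBr !mulmxDl -!scalemxAl -!scalemxAr hSS SP PS hPP scalerA.
  by rewrite [k *: S + _]addrC subrr.
apply/eqP; rewrite -subr_eq0; apply/eqP/mx_eq0_delta => j.
set y := (S - k *: P) *m _.
have Py : P *m y = y by rewrite /y mulmxA mulmxBr -scalemxAr hPP PS.
have : inner y ((S + k *: P) *m y) = 0 by rewrite /y mulmxA TD mul0mx /inner mulmx0 mxE.
rewrite mulmxDl -scalemxAl Py innerDr innerZr => /eqP.
rewrite paddr_eq0 ?((psdE _).1 hS) ?mulr_ge0 ?inner_ge0 ?ltW //.
by case/andP => _; rewrite mulf_eq0 (gt_eqF k_gt0) => /eqP /inner_eq0.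
Qed.

Lemma psd_sqrt_scale_orthoproj m (P : 'M[C]_m) (k : C) :
  orthoproj P -> 0 <= k -> psd_sqrt ((k * k) *: P) = k *: P.
Proof.
move=> hP; rewrite le_eqVlt => /predU1P[<-|k_gt0]; rewrite /psd_sqrt.
  rewrite mul0r !scale0r; case: pselect => [h|_] //=; case: (cid h) => S [hS hSS] /=.
  have orthoproj0 : orthoproj (0 : 'M[C]_m) by split; [exact: raddf0 | exact: mulmx0].
  by rewrite (psd_sqrt_unique orthoproj0 ltr01 hS) ?scaler0.
case: pselect => [h|nh]; first by case: (cid h) => S [hS hSS] /=; exact: psd_sqrt_unique.
case: nh; exists (k *: P); split; first exact/psdZ/psd_orthoproj/hP/ltW.
by rewrite -scalemxAl -scalemxAr hP.2 scalerA.
Qed.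

Lemma exists_orthoproj_fixing m (s : seq 'cV[C]_m) : exists Q : 'M[C]_m,
  [/\ orthoproj Q, {in s, forall w, Q *m w = w} & trR Q <= (size s)%:R].
Proof.
elim: s => [|w s [Q [[hQ hQQ] hQs trQ]]].
  exists 0; split => //; last by rewrite /trR mxtrace0.
  by split; [exact: raddf0 | exact: mulmx0].
set r := w - Q *m w.
have Qr : Q *m r = 0 by rewrite /r mulmxBr mulmxA hQQ subrr.
have rQ : adjmx r *m Q = 0 by rewrite -hQ -adjmxM Qr raddf0.
have Qw_r : w = r + Q *m w by rewrite /r subrK.
have [r0|rn0] := eqVneq r 0.
  exists Q; split => // [v|]; last by rewrite (le_trans trQ) // ler_nat.
  by rewrite inE => /predU1P[->|/hQs //]; rewrite {2}Qw_r r0 add0r.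
set d := inner r r.
have dn0 : d != 0 by apply: contraNneq rn0 => /inner_eq0 ->.
have d_conj : conjc d^-1 = d^-1 by rewrite fmorphV /= inner_conj.
have rr : adjmx r *m r = d%:M := adjmx_mul_inner r r.
(* Gram-Schmidt step: add the projector onto the component of [w] orthogonal to [Q]. *)
exists (Q + d^-1 *: (r *m adjmx r)); split.
- split; first by rewrite raddfD /= adjmxZ adjmxM adjmxK hQ d_conj.
  rewrite mulmxDl !mulmxDr hQQ -!scalemxAl -!scalemxAr !mulmxA Qr mul0mx scaler0 addr0.
  rewrite -(mulmxA r _ Q) rQ mulmx0 scaler0 add0r -(mulmxA r _ r) rr mul_mx_scalar.
  by rewrite -scalemxAl !scalerA mulVf // mulr1.
- move=> v; rewrite inE mulmxDl -scalemxAl -mulmxA => /predU1P[->|vs].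
    have -> : adjmx r *m w = d%:M.
      by rewrite {1}Qw_r mulmxDr rr mulmxA rQ mul0mx addr0.
    by rewrite mul_mx_scalar scalerA mulVf // scale1r addrC -Qw_r.
  by rewrite -{2}(hQs _ vs) (mulmxA (adjmx r)) rQ mul0mx mulmx0 scaler0 addr0 hQs.
- rewrite trRD {2}/trR mxtraceZ mxtrace_mulC rr mxtrace_scalar mulr1n mulVf //.
  by rewrite /= -natr1 lerD2r.
Qed.

Lemma trR_cauchy_schwarz m (T Q : 'M[C]_m) :
  adjmx T = T -> orthoproj Q -> T *m Q = T -> trR T ^+ 2 <= trR Q * trR (T *m T).
Proof.
move=> hT [hQ hQQ] TQ.
have QT : Q *m T = T by rewrite -[LHS]adjmxK adjmxM hT hQ TQ hT.
have TT_psd : psd (T *m T) by have := psd_adj_mul T; rewrite hT.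
have quad (a b : R) :
    0 <= a ^+ 2 * trR Q - 2 * a * b * trR T + b ^+ 2 * trR (T *m T).
  pose M := a%:C *: Q - b%:C *: T.
  have hM : adjmx M = M by rewrite raddfB /= !adjmxZ !conjc_real hQ hT.
  have MM : M *m M = (a * a)%:C *: Q - (a * b)%:C *: T
                     - ((b * a)%:C *: T - (b * b)%:C *: (T *m T)).
    by rewrite mulmxBl !mulmxBr -!scalemxAl -!scalemxAr hQQ QT TQ !scalerA !rmorphM.
  have := trR_psd_ge0 (psd_adj_mul M).
  by rewrite hM MM !trRB !trRZ; nra.
have [T0|h_neq0] := eqVneq (trR (T *m T)) 0.
  have /mxtrace_adj_mul_eq0 T_eq0 : \tr (adjmx T *m T) = 0 by rewrite hT mxtrace_psdE // T0.
  by rewrite T0 mulr0 T_eq0 /trR mxtrace0 /= expr0n.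
have h_gt0 : 0 < trR (T *m T) by rewrite lt_def h_neq0 trR_psd_ge0.
have := quad (trR (T *m T)) (trR T); nra.
Qed.

(* [X] has rank at most [k]: apply Cauchy-Schwarz to [sqrt (X^* X)] and a projector
   of trace at most [k] fixing its range. *)
Lemma trnorm_sum_outer_sq m k (v w : 'I_k -> 'cV[C]_m) (X : 'M[C]_m) :
  X = \sum_i v i *m adjmx (w i) -> trnorm X ^+ 2 <= k%:R * trR (adjmx X *m X).
Proof.
move=> hX; have XX_ge0 := trR_psd_ge0 (psd_adj_mul X).
rewrite /trnorm; have [hT [TT|->]] := psd_sqrtP (adjmx X *m X); last first.
  by rewrite /trR mxtrace0 /= expr0n mulr_ge0.
set T := psd_sqrt _ in hT TT *.
have [Q [hQ hQw trQ]] := exists_orthoproj_fixing [seq w i | i <- enum 'I_k].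
have XQ : X *m (1%:M - Q) = 0.
  rewrite hX mulmx_suml big1 // => i _; rewrite -mulmxA.
  have -> : adjmx (w i) *m (1%:M - Q) = adjmx ((1%:M - Q) *m w i).
    by rewrite adjmxM [adjmx (_ - _)]raddfB /= adjmx1 hQ.1.
  by rewrite mulmxBl mul1mx hQw ?subrr ?raddf0 ?mulmx0 // map_f ?mem_enum.
have TQ : T *m Q = T.
  apply/mulmx_id_compl/mx_eq0_delta => j; rewrite -mulmxA; apply: inner_eq0.
  rewrite -{1}(psd_herm hT) -inner_adjmx mulmxA TT -mulmxA inner_adjmx adjmxK.
  by rewrite mulmxA XQ mul0mx /inner mulmx0 mxE.
apply: le_trans (trR_cauchy_schwarz (psd_herm hT) hQ TQ) _.
rewrite TT ler_wpM2r // (le_trans trQ) //.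
by rewrite size_map size_enum_ord.
Qed.

Lemma lec_Re (z w : C) : z <= w -> complex.Re z <= complex.Re w.
Proof. by rewrite lecE => /andP[]. Qed.

Lemma trnorm_scale_orthoproj m (P : 'M[C]_m) (c : R) :
  orthoproj P -> 0 <= c -> trnorm (c%:C *: P) = c * trR P.
Proof.
move=> [hP hPP] c_ge0; rewrite /trnorm adjmxZ conjc_real hP -scalemxAl -scalemxAr hPP.
by rewrite scalerA psd_sqrt_scale_orthoproj ?ler0c ?trRZ.
Qed.

Lemma loewner_leZ m (c : C) (A B : 'M[C]_m) :
  0 <= c -> loewner_le A B -> loewner_le (c *: A) (c *: B).
Proof. by move=> c_ge0 hAB; rewrite /loewner_le -scalerBr; apply: psdZ. Qed.

Lemma pdist_le_gfid m (rho sigma : 'M[C]_m) (eps : R) :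
  0 <= eps -> pdist rho sigma <= eps -> 1 - eps ^+ 2 <= gfid rho sigma ^+ 2.
Proof.
rewrite /pdist => eps_ge0 hd.
have : 1 - gfid rho sigma ^+ 2 <= eps ^+ 2.
  by rewrite -(ler_sqrt _ (sqr_ge0 eps)) sqrtr_sqr ger0_norm.
lra.
Qed.

Lemma powR2_Nlog2 (c : R) : 0 < c -> 2 `^ (- log2 (1 / c)) = c.
Proof.
move=> c_gt0; rewrite /powR pnatr_eq0 /= /log2 div1r lnV ?posrE //.
have ln2_neq0 : ln (2 : R) != 0 by rewrite gt_eqF // ln_gt0 // ltr1n.
by rewrite mulNr -mulrA mulVf // mulr1 opprK lnK.
Qed.

Lemma le_log2 (c l : R) : 0 < c -> c <= 2 `^ (- l) -> l <= log2 (1 / c).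
Proof.
move=> c_gt0; rewrite -ler_ln ?posrE ?powR_gt0 // ln_powR => hc.
have ln2_gt0 : 0 < ln (2 : R) by rewrite ln_gt0 // ltr1n.
by rewrite /log2 div1r lnV ?posrE // ler_pdivlMr //; lra.
Qed.

Section OrthonormalFamily.
Variables (m k : nat) (f : 'I_k -> 'cV[C]_m).

Definition span_proj : 'M[C]_m := \sum_i f i *m adjmx (f i).

Lemma mxtrace_span_proj_mul (A : 'M[C]_m) :
  \tr (span_proj *m A) = \sum_i inner (f i) (A *m f i).
Proof.
rewrite /span_proj mulmx_suml raddf_sum; apply: eq_bigr => i _ /=.
by rewrite -mulmxA mxtrace_mulC -mulmxA adjmx_mul_inner mxtrace_scalar.
Qed.

Hypothesis f_orthonormal : forall i j, inner (f i) (f j) = (i == j)%:R.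

Lemma orthoproj_span_proj : orthoproj span_proj.
Proof.
split; first by rewrite /span_proj raddf_sum; apply: eq_bigr => i _ /=; rewrite adjmxM adjmxK.
rewrite /span_proj mulmx_suml; apply: eq_bigr => i _.
rewrite mulmx_sumr (bigD1 i) //= big1 ?addr0 => [|j ji];
  rewrite mulmxA -(mulmxA (f i)) adjmx_mul_inner f_orthonormal mul_mx_scalar.
  by rewrite eqxx scale1r.
by rewrite eq_sym (negPf ji) scale0r mul0mx.
Qed.

Lemma mxtrace_span_proj : \tr span_proj = k%:R.
Proof.
rewrite -[span_proj]mulmx1 mxtrace_span_proj_mul.
rewrite (eq_bigr (fun _ => 1)) ?sumr_const ?card_ord // => i _.
by rewrite mul1mx f_orthonormal eqxx.
Qed.

Lemma bessel (A : 'M[C]_m) : psd A -> \sum_i inner (f i) (A *m f i) <= \tr A.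
Proof.
move=> hA; rewrite -mxtrace_span_proj_mul -subr_ge0.
have [hP hPP] := orthoproj_span_proj; set P := span_proj in hP hPP *.
have -> : \tr A - \tr (P *m A) = \tr (adjmx (1%:M - P) *m A *m (1%:M - P)).
  rewrite [in RHS]mxtrace_mulC [in RHS]mulmxA [adjmx (_ - _)]raddfB /= adjmx1 hP.
  have -> : (1%:M - P) *m (1%:M - P) = 1%:M - P.
    by rewrite mulmxBl mul1mx mulmxBr mulmx1 hPP subrr subr0.
  by rewrite mulmxBl mul1mx raddfB.
apply: mxtrace_psd_ge0; apply/psdE => v.
by rewrite -!mulmxA inner_adjmx adjmxK; apply: (psdE A).1.
Qed.

End OrthonormalFamily.

Section CqState.
Variables (dA dR n : nat) (e : 'I_n -> 'cV[C]_dR) (psi : 'I_n -> 'cV[C]_dA).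
Hypothesis e_orthonormal : forall i j, inner (e i) (e j) = (i == j)%:R.
Hypothesis psi_unit : forall i, inner (psi i) (psi i) = 1.
Hypothesis n_gt0 : (0 < n)%N.

Local Notation rho := (cq_state psi e).

Definition cq_vec i : 'cV[C]_(dA * dR) := psi i *t e i.

Lemma cq_vec_orthonormal i j : inner (cq_vec i) (cq_vec j) = (i == j)%:R.
Proof.
by rewrite inner_tens e_orthonormal; case: eqVneq => [->|_]; rewrite ?psi_unit ?mulr1 ?mulr0.
Qed.

Local Notation P := (span_proj cq_vec).
Local Notation P_orthoproj := (orthoproj_span_proj cq_vec_orthonormal).

Lemma cq_stateE : rho = n%:R^-1 *: P.
Proof.
rewrite /cq_state /span_proj; congr (_ *: _); apply: eq_bigr => i _.
rewrite /cq_vec; have /= -> := adjmx_tens (psi i) (e i).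
by have /= -> := tensmx_mul (psi i) (e i) (adjmx (psi i)) (adjmx (e i)).
Qed.

Lemma psd_cq_state : psd rho.
Proof.
by rewrite cq_stateE; apply: psdZ; [rewrite invr_ge0 ler0n | exact: psd_orthoproj P_orthoproj].
Qed.

Lemma trR_cq_state : trR rho = 1.
Proof.
rewrite /trR cq_stateE mxtraceZ mxtrace_span_proj ?mulVf ?pnatr_eq0 -?lt0n //.
exact: cq_vec_orthonormal.
Qed.

Lemma trR_cq_proj : trR P = n%:R.
Proof.
by rewrite /trR (mxtrace_span_proj cq_vec_orthonormal) -(rmorph_nat (real_complex R)).
Qed.

Let kappa : R := Num.sqrt n%:R^-1.

Lemma kappa_sq : kappa ^+ 2 = n%:R^-1.
Proof. by rewrite sqr_sqrtr // invr_ge0 ler0n. Qed.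

Lemma psd_sqrt_scale_cq_state (s : R) :
  0 <= s -> psd_sqrt ((s ^+ 2)%:C *: rho) = (s * kappa)%:C *: P.
Proof.
move=> s_ge0; rewrite cq_stateE scalerA.
have -> : n%:R^-1 = (kappa ^+ 2)%:C :> C by rewrite kappa_sq fmorphV rmorph_nat.
rewrite -rmorphM -exprMn expr2 rmorphM.
by rewrite (psd_sqrt_scale_orthoproj P_orthoproj) //= ler0c mulr_ge0 ?sqrtr_ge0.
Qed.

Lemma psd_sqrt_cq_state : psd_sqrt rho = kappa%:C *: P.
Proof. by have := psd_sqrt_scale_cq_state ler01; rewrite expr1n rmorph1 scale1r mul1r. Qed.

Lemma gfid_cq_state_scale (s : R) : 0 <= s -> gfid rho ((s ^+ 2)%:C *: rho) = s.
Proof.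
move=> s_ge0; rewrite /gfid trR_cq_state subrr mul0r sqrtr0 addr0.
rewrite psd_sqrt_cq_state psd_sqrt_scale_cq_state //.
rewrite -scalemxAl -scalemxAr P_orthoproj.2 scalerA -rmorphM.
rewrite (trnorm_scale_orthoproj P_orthoproj) ?mulr_ge0 ?sqrtr_ge0 // trR_cq_proj.
by rewrite mulrCA -mulrA -expr2 kappa_sq mulVf ?mulr1 // pnatr_eq0 -lt0n.
Qed.

Lemma mxtrace_cq_proj_mul_le (sigma : 'M[C]_(dA * dR)) (w : 'M[C]_dR) (a : R) :
  0 <= a -> density w -> loewner_le sigma (a%:C *: (1%:M *t w)) ->
  trR (P *m sigma) <= a.
Proof.
move=> a_ge0 [hw trw] /psdE hle; rewrite /trR; apply: (@lec_Re _ a%:C).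
rewrite mxtrace_span_proj_mul -[a%:C]mulr1 -trw.
apply: le_trans (ler_wpM2l _ (bessel e_orthonormal hw)); last by rewrite ler0c.
rewrite mulr_sumr; apply: ler_sum => i _.
have := hle (cq_vec i); rewrite mulmxBl innerBr subr_ge0 -scalemxAl innerZr.
rewrite /cq_vec; have /= -> := tensmx_mul 1%:M w (psi i) (e i).
by rewrite mul1mx inner_tens psi_unit mul1r.
Qed.

Lemma gfid_cq_state_sq_le (sigma : 'M[C]_(dA * dR)) (w : 'M[C]_dR) (a : R) :
  0 <= a -> density w -> loewner_le sigma (a%:C *: (1%:M *t w)) ->
  gfid rho sigma ^+ 2 <= a.
Proof.
move=> a_ge0 hw hle.
rewrite /gfid trR_cq_state subrr mul0r sqrtr0 addr0 psd_sqrt_cq_state.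
have [hS hSS] := psd_sqrtP sigma; set S := psd_sqrt sigma in hS hSS *.
have hX : kappa%:C *: P *m S =
         \sum_i (kappa%:C *: cq_vec i) *m adjmx (S *m cq_vec i).
  rewrite /span_proj scaler_sumr mulmx_suml; apply: eq_bigr => i _.
  by rewrite adjmxM (psd_herm hS) mulmxA scalemxAl.
apply: le_trans (trnorm_sum_outer_sq hX) _.
have -> : adjmx (kappa%:C *: P *m S) *m (kappa%:C *: P *m S) =
          (kappa ^+ 2)%:C *: (S *m (P *m S)).
  rewrite adjmxM adjmxZ conjc_real P_orthoproj.1 (psd_herm hS) -!scalemxAl.
  rewrite -!scalemxAr -scalemxAl scalerA -rmorphM -expr2.
  by rewrite -mulmxA (mulmxA P) P_orthoproj.2.
rewrite trRZ mulrA kappa_sq mulfV ?mul1r ?pnatr_eq0 -?lt0n //.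
rewrite /trR mxtrace_mulC -mulmxA -/(trR _).
case: hSS => [->|->]; first exact: mxtrace_cq_proj_mul_le hle.
by rewrite !mulmx0 /trR mxtrace0.
Qed.

Definition cq_marginal : 'M[C]_dR := n%:R^-1 *: span_proj e.

Lemma density_cq_marginal : density cq_marginal.
Proof.
split.
  by apply: psdZ; [rewrite invr_ge0 ler0n | exact/psd_orthoproj/orthoproj_span_proj].
by rewrite mxtraceZ mxtrace_span_proj // mulVf // pnatr_eq0 -lt0n.
Qed.

Lemma cq_state_loewner : loewner_le rho (1%:M *t cq_marginal).
Proof.
rewrite /loewner_le /cq_marginal tensmxZr /cq_state -scalerBr.
apply: psdZ; first by rewrite invr_ge0 ler0n.
rewrite /span_proj tensmx_sumr -sumrB; apply: psd_sum => i _; rewrite -tensmxBl.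
set M := 1%:M - psi i *m adjmx (psi i).
have MM : adjmx M *m M = M.
  have psi1 : adjmx (psi i) *m psi i = 1%:M by rewrite adjmx_mul_inner psi_unit.
  rewrite [adjmx M]raddfB /= adjmx1 adjmxM adjmxK mulmxBl mul1mx mulmxBr mulmx1.
  by rewrite mulmxA -(mulmxA (psi i)) psi1 mulmx1 subrr subr0.
have := psd_adj_mul (M *t adjmx (e i)).
have /= -> := adjmx_tens M (adjmx (e i)).
by rewrite adjmxK; have /= -> := tensmx_mul (adjmx M) (e i) M (adjmx (e i)); rewrite MM.
Qed.

Lemma Hmin_smooth_cq_le (eps : R) : 0 <= eps -> eps < 1 ->
  (Hmin_smooth eps rho <= (log2 (1 / (1 - eps ^+ 2)))%:E)%E.
Proof.
move=> eps_ge0 eps_lt1; have c_gt0 : 0 < 1 - eps ^+ 2 by nra.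
apply: ge_ereal_sup => _ [sigma [hsigma [_ hd]] <-].
apply: ge_ereal_sup => _ [w hw <-].
apply: ge_ereal_sup => _ [l hl <-].
rewrite lee_fin; apply: le_log2 => //.
apply: le_trans (pdist_le_gfid eps_ge0 hd) _.
exact: gfid_cq_state_sq_le (powR_ge0 _ _) hw hl.
Qed.

Lemma Hmin_smooth_cq_ge (eps : R) : 0 <= eps -> eps < 1 ->
  ((log2 (1 / (1 - eps ^+ 2)))%:E <= Hmin_smooth eps rho)%E.
Proof.
move=> eps_ge0 eps_lt1; set c := 1 - eps ^+ 2; have c_gt0 : 0 < c by rewrite /c; nra.
set s := Num.sqrt c; have s2 : s ^+ 2 = c by rewrite sqr_sqrtr ?ltW.
pose sigma := (s ^+ 2)%:C *: rho.
apply: le_trans (ereal_sup_ubound (_ : _ (Hmin sigma))); last first.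
  exists sigma => //; split.
    by apply: psdZ; [rewrite ler0c sqr_ge0 | exact: psd_cq_state].
  split; first by rewrite trRZ trR_cq_state mulr1 s2 /c lerBlDr lerDl sqr_ge0.
  rewrite /pdist gfid_cq_state_scale ?sqrtr_ge0 // s2 /c opprB addrC subrK.
  by rewrite sqrtr_sqr ger0_norm.
apply: le_trans (ereal_sup_ubound (_ : _ (ereal_sup _))); last first.
  by exists cq_marginal; [exact: density_cq_marginal | reflexivity].
apply: ereal_sup_ubound; exists (log2 (1 / c)) => //=.
rewrite powR2_Nlog2 // -s2; apply: loewner_leZ cq_state_loewner.
by rewrite ler0c sqr_ge0.
Qed.

End CqState.

End ComplexMatrices.

Unset Implicit Arguments.
Set Strict Implicit.

Theorem lemma1 (R : realType) (dA dR n : nat) (hn : (0 < n)%N)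
  (e : 'I_n -> 'cV[R[i]]_dR)
  (he : forall i j : 'I_n, (adjmx (e i) *m e j) 0 0 = (i == j)%:R)
  (psi : 'I_n -> 'cV[R[i]]_dA)
  (hpsi : forall i : 'I_n, (adjmx (psi i) *m psi i) 0 0 = 1)
  (eps : R) (heps0 : 0 <= eps) (heps1 : eps < 1) :
  Hmin_smooth eps (cq_state psi e) = (log2 (1 / (1 - eps ^+ 2)))%:E.
Proof.
by apply/le_anti/andP; split; [exact: Hmin_smooth_cq_le | exact: Hmin_smooth_cq_ge].
Qed.
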